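(* Let $f:\mathbb{R}^n\to\mathbb{R}$ be differentiable, $\mu$-strongly convex, with $L$-Lipschitz gradient $\nabla f$, and let $x^*$ be its unique minimizer. Let $\mathcal{E}^t$ denote the event $\|\nabla f(x^t)\|_\infty\le\eta$. If $x\in\mathbb{R}^n$ satisfies $\|x-x^*\|_2>\frac{L\alpha\sqrt{n}}{2\mu}$, then the iterate $x^{t+1}$ of Markov gradient descent satisfies $$\mathbb{E}\left[\|x^{t+1}-x^*\|_2^2\,\middle|\,x^t=x,\mathcal{E}^t\right]<\|x-x^*\|_2^2 .$$
   Context: A differentiable $f$ is $\mu$-strongly convex if $\langle\nabla f(x)-\nabla f(y),x-y\rangle\ge\mu\|x-y\|_2^2$ for all $x,y$. Markov gradient descent (MGD) with lattice resolution $\alpha>0$ and normalizer $\eta>0$: start at $x^0\in\alpha\mathbb{Z}^n$; at step $t$, for each coordinate $i$, conditionally on $x^t$, $\Delta^t_i\in\{0,1\}$ is Bernoulli with $\mathbb{P}[\Delta^t_i=1\mid x^t]=\min(|\partial_i f(x^t)|/\eta,1)$, and $x^{t+1}_i=x^t_i-\alpha\,\mathrm{sgn}(\partial_i f(x^t))\Delta^t_i$. *)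

From HB Require Import structures.
From mathcomp Require Import all_boot all_order all_algebra.
From mathcomp Require Import all_classical all_reals all_analysis.
Set Implicit Arguments. Unset Strict Implicit. Unset Printing Implicit Defensive.
Import Order.TTheory GRing.Theory Num.Theory.
Import numFieldNormedType.Exports.
Local Open Scope ring_scope.

Definition partial {R : realType} {n : nat} (f : 'rV[R]_n -> R) (i : 'I_n)
  (x : 'rV[R]_n) : R := derive f x (delta_mx 0 i).

Definition grad {R : realType} {n : nat} (f : 'rV[R]_n -> R) (x : 'rV[R]_n)
  : 'rV[R]_n := \row_i partial f i x.

Definition dotv {R : realType} {n : nat} (u v : 'rV[R]_n) : R :=
  \sum_i u 0 i * v 0 i.
Definition norm2 {R : realType} {n : nat} (v : 'rV[R]_n) : R :=
  Num.sqrt (\sum_i v 0 i ^+ 2).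
Definition norm_inf_le {R : realType} {n : nat} (v : 'rV[R]_n) (c : R) : Prop :=
  forall i, `|v 0 i| <= c.

Definition strongly_convex {R : realType} {n : nat} (mu : R)
  (f : 'rV[R]_n -> R) : Prop :=
  forall x y, dotv (grad f x - grad f y) (x - y) >= mu * norm2 (x - y) ^+ 2.

Definition lipschitz_grad {R : realType} {n : nat} (L : R)
  (f : 'rV[R]_n -> R) : Prop :=
  forall x y, norm2 (grad f x - grad f y) <= L * norm2 (x - y).

(* One step of Markov gradient descent from x^t = x, with coin outcome
   D : {ffun 'I_n -> bool} (D i = true means Delta_i = 1). *)
Definition mgd_prob {R : realType} {n : nat} (f : 'rV[R]_n -> R) (eta : R)
  (x : 'rV[R]_n) (i : 'I_n) : R := Num.min (`|partial f i x| / eta) 1.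

Definition mgd_next {R : realType} {n : nat} (f : 'rV[R]_n -> R) (alpha : R)
  (x : 'rV[R]_n) (D : {ffun 'I_n -> bool}) : 'rV[R]_n :=
  \row_i (x 0 i - alpha * Num.sg (partial f i x) * (D i)%:R).

Definition mgd_weight {R : realType} {n : nat} (f : 'rV[R]_n -> R) (eta : R)
  (x : 'rV[R]_n) (D : {ffun 'I_n -> bool}) : R :=
  \prod_i (if D i then mgd_prob f eta x i else 1 - mgd_prob f eta x i).

(* E[ g(x^{t+1}) | x^t = x ] *)
Definition mgd_expect {R : realType} {n : nat} (f : 'rV[R]_n -> R)
  (alpha eta : R) (x : 'rV[R]_n) (g : 'rV[R]_n -> R) : R :=
  \sum_(D : {ffun 'I_n -> bool}) mgd_weight f eta x D * g (mgd_next f alpha x D).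

From HB Require Import structures.
From mathcomp Require Import all_boot all_order all_algebra.
From mathcomp Require Import all_classical all_reals all_analysis.
From mathcomp Require Import ring lra.
Import Order.TTheory GRing.Theory Num.Theory.
Import numFieldNormedType.Exports.
Local Open Scope ring_scope.

(* Given E^t, the clipping min(., 1) is inactive, so coordinate i moves by
   -alpha sgn(g_i) with probability |g_i| / eta, independently of the others,
   where g = grad f(x).  The expected squared distance to x* therefore drops by
   (alpha / eta) (2 <g, x - x*> - alpha ||g||_1).  As grad f vanishes at x*, strong
   convexity gives <g, x - x*> >= mu ||x - x*||^2, while Lipschitz continuity
   and Cauchy-Schwarz give alpha ||g||_1 <= alpha sqrt n L ||x - x*||; the
   drop is positive as soon as ||x - x*|| > L alpha sqrt n / (2 mu). *)

Lemma sqr_sum_le_card_sum_sqr {R : realFieldType} {I : finType} (a : I -> R) :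
  (\sum_i a i) ^+ 2 <= #|I|%:R * \sum_i a i ^+ 2.
Proof.
have two_mul_le i j : 2 * (a i * a j) <= a i ^+ 2 + a j ^+ 2.
  by have := sqr_ge0 (a i - a j); rewrite sqrrB -mulr_natl; lra.
have -> : (\sum_i a i) ^+ 2 = \sum_i \sum_j a i * a j.
  by rewrite expr2 mulr_suml; under eq_bigr do rewrite mulr_sumr.
have : 2 * \sum_i \sum_j a i * a j <= \sum_i \sum_j (a i ^+ 2 + a j ^+ 2).
  rewrite mulr_sumr; apply: ler_sum => i _.
  by rewrite mulr_sumr; apply: ler_sum => j _.
have -> : \sum_i \sum_j (a i ^+ 2 + a j ^+ 2) = 2 * (#|I|%:R * \sum_i a i ^+ 2).
  under eq_bigr do rewrite big_split /= sumr_const.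
  by rewrite big_split /= sumr_const sumrMnl -mulr_natl; ring.
by rewrite ler_pM2l.
Qed.

Lemma derive_eq0_at_min {R : realType} {V : normedModType R} (f : V -> R)
    (xs v : V) :
  (forall y, differentiable f y) -> (forall y, f xs <= f y) ->
  'D_v f xs = 0.
Proof.
move=> df xs_min; pose h t := f (t *: v + xs).
have -> : 'D_v f xs = 'D_1 h 0.
  rewrite /derive /h /= scale0r add0r.
  by under [in RHS]eq_fun => t do rewrite addr0 [_%:A]mulr1.
have h_derivable t : derivable h t 1.
  apply: diff_derivable; rewrite /h.
  exact: (@differentiable_comp _ _ _ _ (fun t : R => t *: v + xs) f).
have le_N11 : (-1 : R) <= 1 by rewrite (le_trans (lerN10 _)) ?ler01.
have in_N11 : (0 : R) \in `](-1), 1[ by rewrite in_itv /= ltrN10 ltr01.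
have h_min t : t \in `](-1), 1[ -> h 0 <= h t.
  by move=> _; rewrite /h scale0r add0r.
by case: (derive1_at_min le_N11 (fun t _ => h_derivable t) in_N11 h_min).
Qed.

Lemma sum_ffun_prod_mul_sum {R : comNzRingType} {I J : finType}
    (w h : I -> J -> R) :
  (forall i, \sum_j w i j = 1) ->
  \sum_(D : {ffun I -> J}) (\prod_i w i (D i)) * (\sum_i h i (D i)) =
  \sum_i \sum_j w i j * h i j.
Proof.
move=> w_sum1; under eq_bigr do rewrite mulr_sumr.
rewrite exchange_big /=; apply: eq_bigr => i _.
pose F k j := if k == i then w k j * h k j else w k j.
transitivity (\sum_(D : {ffun I -> J}) \prod_k F k (D k)).
  apply: eq_bigr => D _; rewrite (bigD1 i) //= (bigD1 i (P := predT)) //= /F eqxx.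
  rewrite [X in _ = _ * X](eq_bigr (fun k => w k (D k))); last first.
    by move=> k /negbTE ->.
  by rewrite mulrAC.
rewrite -(bigA_distr_bigA F) (bigD1 i) //= [X in _ * X]big1 ?mulr1.
  by apply: eq_bigr => j _; rewrite /F eqxx.
by move=> k /negbTE ki; rewrite -(w_sum1 k); apply: eq_bigr => j _; rewrite /F ki.
Qed.

Lemma bernoulli_sqr_step {R : realFieldType} (alpha eta d g : R) :
  `|g| / eta * (d - alpha * Num.sg g) ^+ 2 + (1 - `|g| / eta) * d ^+ 2 =
  d ^+ 2 - alpha / eta * (2 * (g * d) - alpha * `|g|).
Proof.
have sg_norm : Num.sg g * `|g| = g := mulr_sg_norm g.
have sg_sqr_norm : Num.sg g * (Num.sg g * `|g|) = `|g| by rewrite sg_norm -normrEsg.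
transitivity (d ^+ 2 - 2 * alpha * d * ((Num.sg g * `|g|) / eta)
   + alpha ^+ 2 * ((Num.sg g * (Num.sg g * `|g|)) / eta)); first ring.
by rewrite sg_sqr_norm sg_norm; ring.
Qed.

Section MarkovGradientStep.
Context {R : realType} {n : nat}.

Lemma norm2_sqr (v : 'rV[R]_n) : norm2 v ^+ 2 = \sum_i v 0 i ^+ 2.
Proof. by rewrite /norm2 sqr_sqrtr // sumr_ge0 // => i _; rewrite sqr_ge0. Qed.

Lemma norm2_const1 : norm2 (const_mx 1 : 'rV[R]_n) = Num.sqrt n%:R.
Proof.
rewrite /norm2; congr Num.sqrt; under eq_bigr do rewrite mxE expr1n.
by rewrite sumr_const card_ord.
Qed.

Lemma sum_abs_le_sqrt_norm2 (v : 'rV[R]_n) :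
  \sum_i `|v 0 i| <= Num.sqrt n%:R * norm2 v.
Proof.
rewrite /norm2 -sqrtrM ?sumr_ge0 // -(ger0_norm (sumr_ge0 _ _)) // -sqrtr_sqr.
rewrite ler_sqrt ?mulr_ge0 ?sumr_ge0 // => [|i _]; last exact: sqr_ge0.
suff -> : \sum_i v 0 i ^+ 2 = \sum_i `|v 0 i| ^+ 2.
  by have := sqr_sum_le_card_sum_sqr (fun i => `|v 0 i|); rewrite card_ord.
by apply: eq_bigr => i _; rewrite real_normK ?num_real.
Qed.

Context {f : 'rV[R]_n -> R}.

Lemma grad_eq0_at_min {xs : 'rV[R]_n} :
  (forall y, differentiable f y) -> (forall y, f xs <= f y) -> grad f xs = 0.
Proof.
by move=> df xs_min; apply/rowP => i; rewrite !mxE /partial derive_eq0_at_min.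
Qed.

Lemma lipschitz_grad_ge0 (L : R) (v : 'rV[R]_n) :
  lipschitz_grad L f -> 0 <= L * norm2 v.
Proof.
by move=> lip; have := lip v 0; rewrite subr0; apply: le_trans; apply: sqrtr_ge0.
Qed.

Lemma mgd_expect_sqr_dist (alpha eta : R) (x c : 'rV[R]_n) :
  0 < eta -> norm_inf_le (grad f x) eta ->
  mgd_expect f alpha eta x (fun y => norm2 (y - c) ^+ 2) =
  norm2 (x - c) ^+ 2
  - alpha / eta * (2 * dotv (grad f x) (x - c) - alpha * \sum_i `|grad f x 0 i|).
Proof.
move=> eta0 g_le_eta; set g := grad f x; set d := x - c.
have partialE i : partial f i x = g 0 i by rewrite /g /grad mxE.
have probE i : mgd_prob f eta x i = `|g 0 i| / eta.
  by rewrite /mgd_prob partialE; apply: min_l; rewrite ler_pdivrMr ?mul1r.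
pose w i (b : bool) := if b then `|g 0 i| / eta else 1 - `|g 0 i| / eta.
pose h i (b : bool) := (d 0 i - alpha * Num.sg (g 0 i) * b%:R) ^+ 2.
transitivity
  (\sum_(D : {ffun 'I_n -> bool}) (\prod_i w i (D i)) * \sum_i h i (D i)).
  apply: eq_bigr => D _; rewrite /mgd_weight norm2_sqr; congr (_ * _).
    by apply: eq_bigr => i _; rewrite /w !probE.
  by apply: eq_bigr => i _; rewrite /h /d !mxE partialE; congr (_ ^+ 2); ring.
rewrite sum_ffun_prod_mul_sum => [|i]; last by rewrite big_bool /w /= addrC subrK.
under eq_bigr do rewrite big_bool /w /h /= mulr1 mulr0 subr0 bernoulli_sqr_step.
by rewrite sumrB -mulr_sumr norm2_sqr sumrB -!mulr_sumr.
Qed.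

Lemma sum_abs_grad_lt_dot {mu L alpha : R} {xs x : 'rV[R]_n} :
  0 < mu -> 0 < alpha -> strongly_convex mu f -> lipschitz_grad L f ->
  grad f xs = 0 -> L * alpha * Num.sqrt n%:R / (2 * mu) < norm2 (x - xs) ->
  alpha * \sum_i `|grad f x 0 i| < 2 * dotv (grad f x) (x - xs).
Proof.
move=> mu0 alpha0 sc lip g0 far; set g := grad f x; set N := norm2 (x - xs).
have dot_ge : mu * N ^+ 2 <= dotv g (x - xs) by have := sc x xs; rewrite g0 subr0.
have g_le : norm2 g <= L * N by have := lip x xs; rewrite g0 subr0.
have L_sqrt_ge0 : 0 <= L * Num.sqrt n%:R.
  by rewrite -norm2_const1 lipschitz_grad_ge0.
have N_gt0 : 0 < N.
  apply: le_lt_trans far; apply: divr_ge0; first by rewrite mulrAC mulr_ge0 // ltW.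
  by rewrite mulr_ge0 // ltW.
have {}far : L * alpha * Num.sqrt n%:R * N < N * (2 * mu) * N.
  by rewrite ltr_pM2r // -ltr_pdivrMr ?mulr_gt0.
have sum_le : alpha * \sum_i `|g 0 i| <= alpha * (Num.sqrt n%:R * (L * N)).
  rewrite ler_pM2l //; apply: le_trans (sum_abs_le_sqrt_norm2 g) _.
  by rewrite ler_wpM2l ?sqrtr_ge0.
lra.
Qed.

End MarkovGradientStep.

Theorem corollary6p5 (R : realType) (n : nat) (f : 'rV[R]_n -> R)
  (mu L alpha eta : R) (xstar x : 'rV[R]_n) :
  0 < mu -> 0 < alpha -> 0 < eta ->
  (forall y, differentiable f y) ->
  strongly_convex mu f ->
  lipschitz_grad L f ->
  (forall y, f xstar <= f y) ->
  (* the event E^t given x^t = x : ||grad f(x)||_oo <= eta *)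
  norm_inf_le (grad f x) eta ->
  norm2 (x - xstar) > L * alpha * Num.sqrt (n%:R) / (2 * mu) ->
  mgd_expect f alpha eta x (fun y => norm2 (y - xstar) ^+ 2)
    < norm2 (x - xstar) ^+ 2.
Proof.
move=> mu0 alpha0 eta0 df sc lip xstar_min g_le_eta far.
have g0 := grad_eq0_at_min df xstar_min.
have descent := sum_abs_grad_lt_dot mu0 alpha0 sc lip g0 far.
rewrite mgd_expect_sqr_dist // gtrBl.
by rewrite mulr_gt0 ?divr_gt0 // subr_gt0.
Qed.
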